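(* Consider the multi-element (three spatial elements, periodic), single-slab space-time SBP scheme: unknowns $\boldsymbol\rho,\boldsymbol g_1,\dots,\boldsymbol g_{n_v}\in\mathbb R^{3(n_t+1)(n_x+1)}$ satisfying $$\mathsf D_t\boldsymbol\rho+\tilde{\mathsf D}_x\langle v\boldsymbol g\rangle=-\sigma_a\boldsymbol\rho-\mathsf H_t^{-1}\mathsf t_B\mathsf t_B^\top(\boldsymbol\rho-\boldsymbol\rho(0)),$$ $$\mathsf D_t\boldsymbol g_k+\tfrac{v_k}{\varepsilon}\tilde{\mathsf D}_x\boldsymbol g_k-\tfrac1\varepsilon\langle v\tilde{\mathsf D}_x\boldsymbol g\rangle+\tfrac{v_k}{\varepsilon^2}\tilde{\mathsf D}_x\boldsymbol\rho=-\Big(\tfrac{\sigma_s}{\varepsilon^2}+\sigma_a\Big)\boldsymbol g_k-\mathsf H_t^{-1}\mathsf t_B\mathsf t_B^\top(\boldsymbol g_k-\boldsymbol g_k(0)),\quad k=1,\dots,n_v,$$ with initial data satisfying $\langle\boldsymbol g(0)\rangle=0$. Then the scheme is stable: with $M_T=\bar{\boldsymbol t}_T\bar{\boldsymbol t}_T^\top\otimes\mathsf I_3\otimes\bar{\mathsf H}_x$ and $M_B=\bar{\boldsymbol t}_B\bar{\boldsymbol t}_B^\top\otimes\mathsf I_3\otimes\bar{\mathsf H}_x$, every solution satisfies $$\tfrac12\boldsymbol\rho^\top M_T\boldsymbol\rho+\tfrac{\varepsilon^2}2\langle\boldsymbol g^\top M_T\boldsymbol g\rangle\le\tfrac12\boldsymbol\rho(0)^\top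 M_B\boldsymbol\rho(0)+\tfrac{\varepsilon^2}2\langle\boldsymbol g(0)^\top M_B\boldsymbol g(0)\rangle.$$
   Context: SBP operators: $\bar{\mathsf D}=\bar{\mathsf H}^{-1}\bar{\mathsf Q}$ on nodes $x_0<\dots<x_n$ is a degree-$p$ SBP approximation of $d/dx$ if $\bar{\mathsf D}\boldsymbol x^k=k\boldsymbol x^{k-1}$ for $0\le k\le p$, $\bar{\mathsf H}$ is diagonal symmetric positive definite, and $\bar{\mathsf Q}+\bar{\mathsf Q}^\top=\bar{\mathsf E}=\bar{\boldsymbol t}_R\bar{\boldsymbol t}_R^\top-\bar{\boldsymbol t}_L\bar{\boldsymbol t}_L^\top=\mathrm{diag}(-1,0,\dots,0,1)$, $\bar{\boldsymbol t}_L,\bar{\boldsymbol t}_R$ first/last unit vectors. $\bar{\mathsf D}_x=\bar{\mathsf H}_x^{-1}\bar{\mathsf Q}_x$ on $n_x+1$ spatial nodes per element, $\bar{\mathsf S}_x=\bar{\mathsf Q}_x-\frac12\bar{\mathsf E}_x$; $\bar{\mathsf D}_t=\bar{\mathsf H}_t^{-1}\bar{\mathsf Q}_t$ on $n_t+1$ temporal nodes, first/last unit vectors $\bar{\boldsymbol t}_B,\bar{\boldsymbol t}_T$. Global periodic spatial operator over three elements: $\tilde{\bar{\mathsf D}}^G_x=(\mathsf I_3\otimes\bar{\mathsf H}_x^{-1})\tilde{\bar{\mathsf Q}}^G_x$, where $\tilde{\bar{\mathsf Q}}^G_x$ is the $3\times3$ block matrix with diagonal blocks $\bar{\mathsf S}_x$,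 blocks $(1,2),(2,3),(3,1)$ equal to $\frac12\bar{\boldsymbol t}_R\bar{\boldsymbol t}_L^\top$ and blocks $(2,1),(3,2),(1,3)$ equal to $-\frac12\bar{\boldsymbol t}_L\bar{\boldsymbol t}_R^\top$. With identities $\mathsf I_{n_x},\mathsf I_{n_t}$ of sizes $n_x+1,n_t+1$: $\tilde{\mathsf D}_x=\mathsf I_{n_t}\otimes\tilde{\bar{\mathsf D}}^G_x$, $\mathsf D_t=\bar{\mathsf D}_t\otimes\mathsf I_3\otimes\mathsf I_{n_x}$, $\mathsf H_t=\bar{\mathsf H}_t\otimes\mathsf I_3\otimes\mathsf I_{n_x}$, $\mathsf t_B=\bar{\boldsymbol t}_B\otimes\mathsf I_3\otimes\mathsf I_{n_x}$. Velocity nodes $v_k$, weights $\omega_k$, $\sum\omega_k=1$, $\sum\omega_kv_k=0$; $\langle\boldsymbol a\rangle=\sum_k\omega_k\boldsymbol a_k$ (e.g. $\langle\boldsymbol g^\top M\boldsymbol g\rangle=\sum_k\omega_k\boldsymbol g_k^\top M\boldsymbol g_k$). $\varepsilon>0$, $\sigma_s>0$, $\sigma_a\ge0$; $\boldsymbol\rho(0),\boldsymbol g_k(0)$ given initial-data vectors. *)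

From mathcomp Require Import all_boot all_order all_algebra.
From mathcomp Require Import mxtens.
Set Implicit Arguments. Unset Strict Implicit. Unset Printing Implicit Defensive.
Import Order.TTheory GRing.Theory Num.Theory.
Local Open Scope ring_scope.

Section Defs.
Variable R : realFieldType.

Definition tL (n : nat) : 'cV[R]_n.+1 := delta_mx ord0 0.
Definition tR (n : nat) : 'cV[R]_n.+1 := delta_mx ord_max 0.

Definition Emx (n : nat) : 'M[R]_n.+1 := tR n *m (tR n)^T - tL n *m (tL n)^T.

Definition xpow (n : nat) (x : 'cV[R]_n.+1) (k : nat) : 'cV[R]_n.+1 :=
  \col_i (x i 0 ^+ k).

Definition SBP (n p : nat) (x : 'cV[R]_n.+1) (H Q : 'M[R]_n.+1) : Prop :=
  [/\ (forall i j : 'I_n.+1, (i < j)%N -> x i 0 < x j 0),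
      (forall k, (k <= p)%N -> (invmx H *m Q) *m xpow x k = k%:R *: xpow x k.-1),
      is_diag_mx H /\ (forall i, 0 < H i i) &
      Q + Q^T = Emx n].

Definition Smx (n : nat) (Q : 'M[R]_n.+1) : 'M[R]_n.+1 := Q - 2^-1 *: Emx n.

(* the 3x3 block matrix ~Q^G_x: diagonal blocks S_x, blocks (1,2),(2,3),(3,1)
   equal to 1/2 tR tL^T, blocks (2,1),(3,2),(1,3) equal to -1/2 tL tR^T *)
Definition QGblock (n : nat) (Q : 'M[R]_n.+1) (a b : 'I_3) : 'M[R]_n.+1 :=
  if a == b then Smx Q
  else if (val b == (val a).+1 %% 3)%N then 2^-1 *: (tR n *m (tL n)^T)
  else - 2^-1 *: (tL n *m (tR n)^T).

Definition QGx (n : nat) (Q : 'M[R]_n.+1) : 'M[R]_(3 * n.+1) :=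
  \matrix_(i, j) QGblock Q (mxtens_unindex i).1 (mxtens_unindex j).1
                          (mxtens_unindex i).2 (mxtens_unindex j).2.

Definition DGx (n : nat) (H Q : 'M[R]_n.+1) : 'M[R]_(3 * n.+1) :=
  ((1%:M : 'M[R]_3) *t invmx H) *m QGx Q.

Definition I3x (nx : nat) : 'M[R]_(3 * nx.+1) := (1%:M : 'M[R]_3) *t (1%:M : 'M[R]_nx.+1).

Definition Dxt (nt nx : nat) (Hx Qx : 'M[R]_nx.+1)
  : 'M[R]_(nt.+1 * (3 * nx.+1)) := (1%:M : 'M[R]_nt.+1) *t DGx Hx Qx.
Definition Dtg (nx nt : nat) (Ht Qt : 'M[R]_nt.+1)
  : 'M[R]_(nt.+1 * (3 * nx.+1)) := (invmx Ht *m Qt) *t I3x nx.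
Definition Htg (nx nt : nat) (Ht : 'M[R]_nt.+1)
  : 'M[R]_(nt.+1 * (3 * nx.+1)) := Ht *t I3x nx.
Definition tBg (nx nt : nat) : 'M[R]_(nt.+1 * (3 * nx.+1), 1 * (3 * nx.+1)) := tL nt *t I3x nx.

Definition MT (nt nx : nat) (Hx : 'M[R]_nx.+1) : 'M[R]_(nt.+1 * (3 * nx.+1)) :=
  (tR nt *m (tR nt)^T) *t ((1%:M : 'M[R]_3) *t Hx).
Definition MB (nt nx : nat) (Hx : 'M[R]_nx.+1) : 'M[R]_(nt.+1 * (3 * nx.+1)) :=
  (tL nt *m (tL nt)^T) *t ((1%:M : 'M[R]_3) *t Hx).

Definition avg (nv N : nat) (w : 'I_nv -> R) (a : 'I_nv -> 'cV[R]_N) : 'cV[R]_N :=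
  \sum_(k < nv) w k *: a k.
Definition avgR (nv : nat) (w : 'I_nv -> R) (a : 'I_nv -> R) : R :=
  \sum_(k < nv) w k * a k.

Definition qf (N : nat) (M : 'M[R]_N) (u : 'cV[R]_N) : R := (u^T *m M *m u) 0 0.

End Defs.
Arguments tBg {R} nx nt.

(* Energy method.  With the space-time norm H = H_t (x) I_3 (x) H_x, the SBP
   property in time makes the symmetric part of H D_t equal to (M_T - M_B)/2,
   periodic coupling makes H D_x skew-symmetric, and the SAT penalty satisfies
   H H_t^-1 t_B t_B^T = M_B.  Testing D_t u + r = -c u - P (u - u0) against
   u^T H and using u^T M_B u0 <= (u^T M_B u + u0^T M_B u0)/2 gives
     u^T M_T u / 2 + c u^T H u <= u0^T M_B u0 / 2 - u^T H r.
   Averaging the g_k-equations shows that <g> solves the homogeneous damped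
   equation, so <g> = 0; the flux terms of the rho-estimate and of eps^2 times
   the averaged g-estimate then cancel by skew-symmetry of H D_x. *)

From mathcomp Require Import all_boot all_order all_algebra.
From mathcomp Require Import mxtens ring lra.
Set Implicit Arguments.
Unset Strict Implicit.
Unset Printing Implicit Defensive.
Import Order.TTheory GRing.Theory Num.Theory.
Local Open Scope ring_scope.

Section BilinearForm.
Variables (R : comPzRingType) (n : nat).
Implicit Types (M K : 'M[R]_n) (u z : 'cV[R]_n).

Definition bform M u z : R := (u^T *m M *m z) 0 0.

Lemma bformDr M u z1 z2 : bform M u (z1 + z2) = bform M u z1 + bform M u z2.
Proof. by rewrite /bform mulmxDr mxE. Qed.

Lemma bformNr M u z : bform M u (- z) = - bform M u z.
Proof. by rewrite /bform mulmxN mxE. Qed.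

Lemma bformBr M u z1 z2 : bform M u (z1 - z2) = bform M u z1 - bform M u z2.
Proof. by rewrite bformDr bformNr. Qed.

Lemma bformZr M u a z : bform M u (a *: z) = a * bform M u z.
Proof. by rewrite /bform -scalemxAr mxE. Qed.

Lemma bform0r M u : bform M u 0 = 0.
Proof. by rewrite /bform mulmx0 mxE. Qed.

Lemma bform_sumr M u I (r : seq I) (P : pred I) (F : I -> 'cV[R]_n) :
  bform M u (\sum_(i <- r | P i) F i) = \sum_(i <- r | P i) bform M u (F i).
Proof. by rewrite /bform mulmx_sumr summxE. Qed.

Lemma bform_mulmxr M K u z : bform M u (K *m z) = bform (M *m K) u z.
Proof. by rewrite /bform !mulmxA. Qed.

Lemma bform_addmx M K u z : bform (M + K) u z = bform M u z + bform K u z.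
Proof. by rewrite /bform mulmxDr mulmxDl mxE. Qed.

Lemma bform_submx M K u z : bform (M - K) u z = bform M u z - bform K u z.
Proof. by rewrite /bform mulmxBr mulmxBl !mxE. Qed.

Lemma bform_trmx M u z : bform M^T u z = bform M z u.
Proof.
rewrite /bform [RHS](_ : _ = (z^T *m M *m u)^T 0 0); last by rewrite [in RHS]mxE.
by rewrite !trmx_mul trmxK mulmxA.
Qed.

Lemma bformZl M a u z : bform M (a *: u) z = a * bform M u z.
Proof. by rewrite -bform_trmx bformZr bform_trmx. Qed.

Lemma bformBl M u1 u2 z : bform M (u1 - u2) z = bform M u1 z - bform M u2 z.
Proof. by rewrite -bform_trmx bformBr !bform_trmx. Qed.

Lemma bform0l M z : bform M 0 z = 0.
Proof. by rewrite -bform_trmx bform0r. Qed.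

Lemma bform_suml M z I (r : seq I) (P : pred I) (F : I -> 'cV[R]_n) :
  bform M (\sum_(i <- r | P i) F i) z = \sum_(i <- r | P i) bform M (F i) z.
Proof.
by rewrite -bform_trmx bform_sumr; apply: eq_bigr => i _; rewrite bform_trmx.
Qed.

Lemma bform_add_trmx M u : bform (M + M^T) u u = bform M u u *+ 2.
Proof. by rewrite bform_addmx bform_trmx mulr2n. Qed.

Lemma bform_skew M u z : M^T = - M -> bform M u z = - bform M z u.
Proof. by move=> skewM; rewrite -bform_trmx skewM /bform mulmxN mulNmx mxE. Qed.

End BilinearForm.

Section QuadraticForm.
Variable R : realFieldType.

Definition psdmx n (M : 'M[R]_n) : Prop := forall u, 0 <= qf M u.
Definition posdefmx n (M : 'M[R]_n) : Prop := forall u, u != 0 -> 0 < qf M u.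

Variable n : nat.
Implicit Types (M : 'M[R]_n) (u z : 'cV[R]_n).

Lemma qf_bform M u : qf M u = bform M u u.
Proof. by []. Qed.

Lemma posdefmx_psd M : posdefmx M -> psdmx M.
Proof.
move=> pdM u; have [->|/pdM/ltW //] := eqVneq u 0.
by rewrite qf_bform bform0r.
Qed.

Lemma qf_skew M u : M^T = - M -> qf M u = 0.
Proof. by move=> /(bform_skew u u) skew_uu; rewrite qf_bform; lra. Qed.

Lemma psd_bform_le M u z : M^T = M -> psdmx M -> bform M u z <= (qf M u + qf M z) / 2.
Proof.
move=> symM psdM; have := psdM (u - z).
rewrite !qf_bform bformBl !bformBr -[bform M z u]bform_trmx symM; lra.
Qed.

Lemma qf_diag (d : 'rV[R]_n) u : qf (diag_mx d) u = \sum_i d 0 i * u i 0 ^+ 2.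
Proof. by rewrite /qf mul_mx_diag mxE; apply: eq_bigr => i _; rewrite !mxE; ring. Qed.

Lemma diag_psdmx M : is_diag_mx M -> (forall i, 0 <= M i i) -> psdmx M.
Proof.
case/diag_mxP=> d -> d_ge0 u; rewrite qf_diag; apply: sumr_ge0 => i _.
by have := d_ge0 i; rewrite mxE eqxx mulr1n => ?; rewrite mulr_ge0 ?sqr_ge0.
Qed.

Lemma diag_posdefmx M : is_diag_mx M -> (forall i, 0 < M i i) -> posdefmx M.
Proof.
case/diag_mxP=> d -> d_gt0 u u_neq0.
have {}d_gt0 i : 0 < d 0 i by have := d_gt0 i; rewrite mxE eqxx mulr1n.
have terms_ge0 i : 0 <= d 0 i * u i 0 ^+ 2 by rewrite mulr_ge0 ?sqr_ge0 ?ltW.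
rewrite qf_diag lt0r sumr_ge0 ?andbT //; apply: contra u_neq0 => /eqP sum0.
apply/eqP/matrixP => i j; rewrite (ord1 j) mxE.
have /eqP := psumr_eq0P (fun i _ => terms_ge0 i) sum0 (i := i) isT.
by rewrite mulf_eq0 sqrf_eq0 (gt_eqF (d_gt0 i)) => /eqP.
Qed.

End QuadraticForm.

Section VelocityAverage.
Variables (R : realFieldType) (nv N : nat) (w : 'I_nv -> R).
Implicit Types (a b : 'I_nv -> 'cV[R]_N) (f h : 'I_nv -> R).

Lemma eq_avg a b : (forall k, a k = b k) -> avg w a = avg w b.
Proof. by move=> eq_ab; apply: eq_bigr => k _; rewrite eq_ab. Qed.

Lemma avgD a b : avg w (fun k => a k + b k) = avg w a + avg w b.
Proof. by rewrite /avg -big_split; apply: eq_bigr => k _; rewrite scalerDr. Qed.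

Lemma avgN a : avg w (fun k => - a k) = - avg w a.
Proof. by rewrite /avg -sumrN; apply: eq_bigr => k _; rewrite scalerN. Qed.

Lemma avgZ c a : avg w (fun k => c *: a k) = c *: avg w a.
Proof. by rewrite /avg scaler_sumr; apply: eq_bigr => k _; rewrite !scalerA mulrC. Qed.

Lemma avg_cst (x : 'cV[R]_N) : avg w (fun=> x) = (\sum_k w k) *: x.
Proof. by rewrite /avg scaler_suml. Qed.

Lemma avg_mulmx (M : 'M[R]_N) a : avg w (fun k => M *m a k) = M *m avg w a.
Proof. by rewrite /avg mulmx_sumr; apply: eq_bigr => k _; rewrite scalemxAr. Qed.

Lemma avg_scale_mulr f c a :
  avg w (fun k => (f k * c) *: a k) = c *: avg w (fun k => f k *: a k).
Proof.
by rewrite /avg scaler_sumr; apply: eq_bigr => k _; rewrite !scalerA mulrA mulrC mulrA.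
Qed.

Lemma avg_cst_scale f (x : 'cV[R]_N) : avg w (fun k => f k *: x) = avgR w f *: x.
Proof. by rewrite /avg /avgR scaler_suml; apply: eq_bigr => k _; rewrite scalerA. Qed.

Lemma avgRD f h : avgR w (fun k => f k + h k) = avgR w f + avgR w h.
Proof. by rewrite /avgR -big_split; apply: eq_bigr => k _; rewrite mulrDr. Qed.

Lemma avgRN f : avgR w (fun k => - f k) = - avgR w f.
Proof. by rewrite /avgR -sumrN; apply: eq_bigr => k _; rewrite mulrN. Qed.

Lemma avgRMl c f : avgR w (fun k => c * f k) = c * avgR w f.
Proof. by rewrite /avgR mulr_sumr; apply: eq_bigr => k _; rewrite mulrCA. Qed.

Lemma avgRMr c f : avgR w (fun k => f k * c) = avgR w f * c.
Proof. by rewrite /avgR mulr_suml; apply: eq_bigr => k _; rewrite mulrA. Qed.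

Lemma avgR_bforml (M : 'M[R]_N) a z :
  avgR w (fun k => bform M (a k) z) = bform M (avg w a) z.
Proof. by rewrite bform_suml; apply: eq_bigr => k _; rewrite bformZl. Qed.

Lemma ler_avgR f h :
  (forall k, 0 <= w k) -> (forall k, f k <= h k) -> avgR w f <= avgR w h.
Proof. by move=> w_ge0 le_fh; apply: ler_sum => k _; rewrite ler_wpM2l. Qed.

End VelocityAverage.

Section EnergyMethod.
Variables (R : realFieldType) (N : nat) (H Dt Dx P MT MB : 'M[R]_N).
Hypotheses (H_posdef : posdefmx H) (MT_psd : psdmx MT) (MB_psd : psdmx MB).
Hypothesis MB_sym : MB^T = MB.
Hypothesis Dt_sbp : H *m Dt + (H *m Dt)^T = MT - MB.
Hypothesis Dx_skew : (H *m Dx)^T = - (H *m Dx).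
Hypothesis P_sat : H *m P = MB.

Lemma energy_estimate c (u u0 r : 'cV[R]_N) :
  0 <= c -> Dt *m u + r = - c *: u - P *m (u - u0) ->
  qf MT u / 2 + c * qf H u <= qf MB u0 / 2 - bform H u r.
Proof.
move=> c_ge0 /(congr1 (bform H u)).
rewrite bformDr bformBr bformZr !bform_mulmxr P_sat bformBr.
have := bform_add_trmx (H *m Dt) u; rewrite Dt_sbp bform_submx.
have := psd_bform_le u u0 MB_sym MB_psd.
have := mulr_ge0 c_ge0 (posdefmx_psd H_posdef u).
rewrite !qf_bform; lra.
Qed.

Lemma damped_solution_eq0 c (u : 'cV[R]_N) :
  0 < c -> Dt *m u = - c *: u - P *m u -> u = 0.
Proof.
move=> c_gt0 Eu; apply/eqP/negPn/negP => /H_posdef qH_gt0.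
have := @energy_estimate c u 0 0 (ltW c_gt0); rewrite addr0 subr0 => /(_ Eu).
rewrite bform0r [qf MB 0]qf_bform bform0r.
have := MT_psd u; have := mulr_gt0 c_gt0 qH_gt0; lra.
Qed.

Variables (nv : nat) (v w : 'I_nv -> R) (eps sigma_s sigma_a : R).
Variables (rho0 rho : 'cV[R]_N) (g0 g : 'I_nv -> 'cV[R]_N).
Hypotheses (w_gt0 : forall k, 0 < w k) (w_sum1 : \sum_(k < nv) w k = 1).
Hypothesis wv_sum0 : \sum_(k < nv) w k * v k = 0.
Hypotheses (eps_gt0 : 0 < eps) (sigma_s_gt0 : 0 < sigma_s) (sigma_a_ge0 : 0 <= sigma_a).
Hypothesis g0_mean0 : avg w g0 = 0.
Hypothesis rho_eq : Dt *m rho + Dx *m avg w (fun k => v k *: g k)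
  = - sigma_a *: rho - P *m (rho - rho0).
Hypothesis g_eq : forall k,
  Dt *m g k + (v k / eps) *: (Dx *m g k)
    - eps^-1 *: avg w (fun j => v j *: (Dx *m g j))
    + (v k / eps ^+ 2) *: (Dx *m rho)
  = - (sigma_s / eps ^+ 2 + sigma_a) *: g k - P *m (g k - g0 k).

Local Notation flux := (avg w (fun k => v k *: g k)).

Lemma avg_flux : avg w (fun k => v k *: (Dx *m g k)) = Dx *m flux.
Proof. by rewrite -avg_mulmx; apply: eq_avg => k; rewrite scalemxAr. Qed.

Let damping_gt0 : 0 < sigma_s / eps ^+ 2 + sigma_a.
Proof. by rewrite ltr_wpDr // divr_gt0 // exprn_gt0. Qed.

Lemma avg_g_eq0 : avg w g = 0.
Proof.
apply: (damped_solution_eq0 damping_gt0).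
have wv0 : avgR w v = 0 := wv_sum0.
move: (eq_avg w g_eq).
rewrite !(avgD, avgN, avg_mulmx, avgZ, avg_scale_mulr, avg_cst, avg_cst_scale, avgRMr).
by rewrite w_sum1 wv0 g0_mean0 scale1r scale0r scaler0 addrK addr0 subr0.
Qed.

Lemma rho_energy : qf MT rho / 2 <= qf MB rho0 / 2 - bform (H *m Dx) rho flux.
Proof.
have := energy_estimate sigma_a_ge0 rho_eq; rewrite bform_mulmxr.
have := mulr_ge0 sigma_a_ge0 (posdefmx_psd H_posdef rho); lra.
Qed.

Lemma g_energy k :
  qf MT (g k) / 2 <= qf MB (g0 k) / 2 + eps^-1 * bform (H *m Dx) (g k) flux
                     - (eps ^+ 2)^-1 * bform (H *m Dx) (v k *: g k) rho.
Proof.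
have := g_eq k; rewrite avg_flux -!addrA => /(energy_estimate (ltW damping_gt0)).
rewrite !(bformDr, bformNr, bformZr, bform_mulmxr) bformZl -qf_bform (qf_skew _ Dx_skew).
have := mulr_ge0 (ltW damping_gt0) (posdefmx_psd H_posdef (g k)); lra.
Qed.

Lemma avg_g_energy :
  avgR w (fun k => qf MT (g k)) / 2
  <= avgR w (fun k => qf MB (g0 k)) / 2 + (eps ^+ 2)^-1 * bform (H *m Dx) rho flux.
Proof.
have := ler_avgR (fun k => ltW (w_gt0 k)) g_energy.
rewrite !(avgRD, avgRN, avgRMl, avgRMr, avgR_bforml) avg_g_eq0 bform0l.
by rewrite (bform_skew _ _ Dx_skew); lra.
Qed.

Theorem kinetic_energy_estimate :
  2^-1 * qf MT rho + eps ^+ 2 / 2 * avgR w (fun k => qf MT (g k))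
  <= 2^-1 * qf MB rho0 + eps ^+ 2 / 2 * avgR w (fun k => qf MB (g0 k)).
Proof.
have eps2_gt0 : 0 < eps ^+ 2 by rewrite exprn_gt0.
have := ler_wpM2l (ltW eps2_gt0) avg_g_energy.
rewrite mulrDr mulVKf ?gt_eqF //.
have := rho_energy; lra.
Qed.

End EnergyMethod.

Lemma diag_unitmx (F : fieldType) n (M : 'M[F]_n) :
  is_diag_mx M -> (forall i, M i i != 0) -> M \in unitmx.
Proof.
case/diag_mxP=> d -> d_neq0; rewrite unitmxE det_diag unitfE.
by apply/prodf_neq0 => i _; have := d_neq0 i; rewrite mxE eqxx mulr1n.
Qed.

Lemma trmx_diag (V : nmodType) n (M : 'M[V]_n) : is_diag_mx M -> M^T = M.
Proof. by case/diag_mxP=> d ->; rewrite tr_diag_mx. Qed.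

Section TensorProduct.
Variable R : comPzRingType.

Lemma tensmx11 m n : (1%:M : 'M[R]_m) *t (1%:M : 'M[R]_n) = 1%:M.
Proof.
apply/matrixP=> i j; case: (mxtens_indexP i) => i1 i2; case: (mxtens_indexP j) => j1 j2.
rewrite tensmxE !mxE (inj_eq (can_inj (@mxtens_indexK _ _))) xpair_eqE.
by case: (i1 == j1); case: (i2 == j2); rewrite ?mulr1 ?mulr0.
Qed.

Lemma tensmxDl m n p q (A B : 'M[R]_(m, n)) (C : 'M[R]_(p, q)) :
  (A + B) *t C = A *t C + B *t C.
Proof. by apply/matrixP=> i j; rewrite !mxE mulrDl. Qed.

Lemma tensmxBl m n p q (A B : 'M[R]_(m, n)) (C : 'M[R]_(p, q)) :
  (A - B) *t C = A *t C - B *t C.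
Proof. by apply/matrixP=> i j; rewrite !mxE mulrBl. Qed.

Lemma tensmxNr m n p q (A : 'M[R]_(m, n)) (C : 'M[R]_(p, q)) : A *t (- C) = - (A *t C).
Proof. by apply/matrixP=> i j; rewrite !mxE mulrN. Qed.

Lemma tensmx_is_diag m n (A : 'M[R]_m) (B : 'M[R]_n) :
  is_diag_mx A -> is_diag_mx B -> is_diag_mx (A *t B).
Proof.
move=> /is_diag_mxP A_diag /is_diag_mxP B_diag; apply/is_diag_mxP => i j.
case: (mxtens_indexP i) => i1 i2; case: (mxtens_indexP j) => j1 j2.
rewrite tensmxE; have [<-|i1j1_neq] := eqVneq i1 j1 => [ij_neq|_].
  by rewrite B_diag ?mulr0 //; apply: contraNneq ij_neq => /val_inj ->.
by rewrite A_diag ?mul0r ?val_eqE.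
Qed.

Lemma delta_mx_is_diag n (i : 'I_n) : is_diag_mx (delta_mx i i : 'M[R]_n).
Proof.
apply/is_diag_mxP => j k jk_neq; rewrite mxE.
have [ji|] := eqVneq j i; have [ki|] := eqVneq k i; rewrite ?andbF //=.
by move: jk_neq; rewrite ji ki eqxx.
Qed.

End TensorProduct.

Lemma tensmx_diag_ge0 (R : numDomainType) m n (A : 'M[R]_m) (B : 'M[R]_n) :
  (forall i, 0 <= A i i) -> (forall j, 0 <= B j j) -> forall k, 0 <= (A *t B) k k.
Proof. by move=> A_ge0 B_ge0 k; rewrite mxE mulr_ge0. Qed.

Lemma tensmx_diag_gt0 (R : numDomainType) m n (A : 'M[R]_m) (B : 'M[R]_n) :
  (forall i, 0 < A i i) -> (forall j, 0 < B j j) -> forall k, 0 < (A *t B) k k.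
Proof. by move=> A_gt0 B_gt0 k; rewrite mxE mulr_gt0. Qed.

Section GlobalSpatialOperator.
Variables (R : realFieldType) (n : nat) (Q : 'M[R]_n.+1).
Hypothesis Q_sbp : Q + Q^T = Emx R n.

Lemma trmx_Emx : (Emx R n)^T = Emx R n.
Proof. by rewrite /Emx linearB /= !trmx_mul !trmxK. Qed.

Lemma Smx_skew : (Smx Q)^T = - Smx Q.
Proof.
apply/matrixP => i j; have := congr1 (fun M : 'M_n.+1 => M j i) Q_sbp.
have := congr1 (fun M : 'M_n.+1 => M i j) trmx_Emx; rewrite !mxE; lra.
Qed.

Lemma QGblock_skew a b : QGblock Q b a = - (QGblock Q a b)^T.
Proof.
rewrite /QGblock; case: eqVneq => [_|ab_neq]; first by rewrite Smx_skew opprK.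
case: a ab_neq => [[|[|[|a]]] ?] //; case: b => [[|[|[|b]]] ?] //= _;
  by rewrite linearZ /= trmx_mul trmxK ?scaleNr ?opprK.
Qed.

Lemma QGx_skew : (QGx Q)^T = - QGx Q.
Proof. by apply/matrixP => i j; rewrite !mxE QGblock_skew [in LHS]mxE [in LHS]mxE. Qed.

End GlobalSpatialOperator.

Section SpaceTimeSBP.
Variables (R : realFieldType) (nx nt : nat) (Hx Qx : 'M[R]_nx.+1) (Ht Qt : 'M[R]_nt.+1).

Definition Hst : 'M[R]_(nt.+1 * (3 * nx.+1)) := Ht *t ((1%:M : 'M[R]_3) *t Hx).

Lemma tL_outer : tL R nt *m (tL R nt)^T = delta_mx ord0 ord0.
Proof. by rewrite /tL trmx_delta mul_delta_mx. Qed.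

Lemma tR_outer : tR R nt *m (tR R nt)^T = delta_mx ord_max ord_max.
Proof. by rewrite /tR trmx_delta mul_delta_mx. Qed.

Hypotheses (Hx_diag : is_diag_mx Hx) (Hx_gt0 : forall i, 0 < Hx i i).
Hypotheses (Ht_diag : is_diag_mx Ht) (Ht_gt0 : forall i, 0 < Ht i i).

Let Hx_unit : Hx \in unitmx.
Proof. by apply: diag_unitmx => // i; rewrite gt_eqF. Qed.

Let Ht_unit : Ht \in unitmx.
Proof. by apply: diag_unitmx => // i; rewrite gt_eqF. Qed.

Let I3Hx_diag : is_diag_mx ((1%:M : 'M[R]_3) *t Hx).
Proof. exact: tensmx_is_diag (scalar_mx_is_diag _ _) Hx_diag. Qed.

Let I3Hx_gt0 i : 0 < ((1%:M : 'M[R]_3) *t Hx) i i.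
Proof. by apply: tensmx_diag_gt0 => // j; rewrite mxE eqxx ltr01. Qed.

Lemma Hst_posdef : posdefmx Hst.
Proof.
exact: diag_posdefmx (tensmx_is_diag Ht_diag I3Hx_diag) (tensmx_diag_gt0 Ht_gt0 I3Hx_gt0).
Qed.

Lemma delta_tens_psd (i : 'I_nt.+1) : psdmx (delta_mx i i *t ((1%:M : 'M[R]_3) *t Hx)).
Proof.
apply: diag_psdmx; first by apply: tensmx_is_diag => //; apply: delta_mx_is_diag.
by apply: tensmx_diag_ge0 => j; [rewrite mxE ler0n | exact/ltW/I3Hx_gt0].
Qed.

Lemma MT_psd : psdmx (MT nt Hx).
Proof. by rewrite /MT tR_outer; apply: delta_tens_psd. Qed.

Lemma MB_psd : psdmx (MB nt Hx).
Proof. by rewrite /MB tL_outer; apply: delta_tens_psd. Qed.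

Lemma trmx_MB : (MB nt Hx)^T = MB nt Hx.
Proof. by rewrite /MB tL_outer trmx_tens trmx_delta (trmx_diag I3Hx_diag). Qed.

Lemma Hst_Dtg : Hst *m Dtg nx Ht Qt = Qt *t ((1%:M : 'M[R]_3) *t Hx).
Proof. by rewrite /Hst /Dtg /I3x tensmx11 tensmx_mul mulmx1 mulmxA mulmxV // mul1mx. Qed.

Lemma Hst_Dtg_sbp : Qt + Qt^T = Emx R nt ->
  Hst *m Dtg nx Ht Qt + (Hst *m Dtg nx Ht Qt)^T = MT nt Hx - MB nt Hx.
Proof.
move=> Qt_sbp; rewrite Hst_Dtg trmx_tens (trmx_diag I3Hx_diag) -tensmxDl Qt_sbp.
by rewrite /Emx tensmxBl.
Qed.

Lemma Hst_Dxt : Hst *m Dxt nt Hx Qx = Ht *t QGx Qx.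
Proof.
rewrite /Hst /Dxt /DGx tensmx_mul mulmx1 mulmxA tensmx_mul mulmx1 mulmxV //.
by rewrite tensmx11 mul1mx.
Qed.

Lemma Hst_Dxt_skew : Qx + Qx^T = Emx R nx ->
  (Hst *m Dxt nt Hx Qx)^T = - (Hst *m Dxt nt Hx Qx).
Proof.
by move=> Qx_sbp; rewrite Hst_Dxt trmx_tens QGx_skew // tensmxNr (trmx_diag Ht_diag).
Qed.

Lemma Hst_sat : Hst *m (invmx (Htg nx Ht) *m (tBg nx nt *m (tBg nx nt)^T)) = MB nt Hx.
Proof.
have Htg_unit : Htg nx Ht \in unitmx.
  by rewrite /Htg /I3x tensmx11 tensmx_unit ?unitmx1.
have -> : Hst = (1%:M *t ((1%:M : 'M[R]_3) *t Hx)) *m Htg nx Ht.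
  by rewrite /Hst /Htg /I3x tensmx11 tensmx_mul mul1mx mulmx1.
rewrite mulmxA mulmxK // /tBg /I3x tensmx11 trmx_tens trmx1 !tensmx_mul mul1mx mulmx1.
by rewrite /MB mulmx1.
Qed.

End SpaceTimeSBP.

Theorem theorem3p8 (R : realFieldType) (nx nt px pt nv : nat)
    (xnodes : 'cV[R]_nx.+1) (Hx Qx : 'M[R]_nx.+1)
    (tnodes : 'cV[R]_nt.+1) (Ht Qt : 'M[R]_nt.+1)
    (v w : 'I_nv -> R) (eps sigma_s sigma_a : R)
    (rho0 rho : 'cV[R]_(nt.+1 * (3 * nx.+1)))
    (g0 g : 'I_nv -> 'cV[R]_(nt.+1 * (3 * nx.+1))) :
  SBP px xnodes Hx Qx ->
  SBP pt tnodes Ht Qt ->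
  (forall k, 0 < w k) ->
  \sum_(k < nv) w k = 1 ->
  \sum_(k < nv) w k * v k = 0 ->
  0 < eps -> 0 < sigma_s -> 0 <= sigma_a ->
  avg w g0 = 0 ->
  Dtg nx Ht Qt *m rho + Dxt nt Hx Qx *m avg w (fun k => v k *: g k)
    = - sigma_a *: rho
      - invmx (Htg nx Ht) *m (tBg nx nt *m (tBg nx nt)^T) *m (rho - rho0) ->
  (forall k : 'I_nv,
     Dtg nx Ht Qt *m g k + (v k / eps) *: (Dxt nt Hx Qx *m g k)
       - eps^-1 *: avg w (fun j => v j *: (Dxt nt Hx Qx *m g j))
       + (v k / eps ^+ 2) *: (Dxt nt Hx Qx *m rho)
     = - (sigma_s / eps ^+ 2 + sigma_a) *: g k
       - invmx (Htg nx Ht) *m (tBg nx nt *m (tBg nx nt)^T) *m (g k - g0 k)) ->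
  2^-1 * qf (MT nt Hx) rho + eps ^+ 2 / 2 * avgR w (fun k => qf (MT nt Hx) (g k))
    <= 2^-1 * qf (MB nt Hx) rho0 + eps ^+ 2 / 2 * avgR w (fun k => qf (MB nt Hx) (g0 k)).
Proof.
move=> [_ _ [Hx_diag Hx_gt0] Qx_sbp] [_ _ [Ht_diag Ht_gt0] Qt_sbp].
apply: (kinetic_energy_estimate (H := Hst Hx Ht)).
- exact: Hst_posdef.
- exact: MT_psd.
- exact: MB_psd.
- exact: trmx_MB.
- exact: Hst_Dtg_sbp.
- exact: Hst_Dxt_skew.
- exact: Hst_sat.
Qed.
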